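(* Let $(a,b,c,\lambda)\in(\mathbb F^\times)^4$. For any $\triangle_q$-module $V$ and $v\in V$ the following are equivalent: (i) there exists a $\triangle_q$-module homomorphism $M_\lambda(a,b,c)\to V$ sending $m_0$ to $v$; (ii) $Bv=\theta_0^*v$, $(B-\theta_1^* )Av=(\theta_0(\theta_0^*-\theta_1^* )+\varphi_1)v$, $\beta v=\omega^*v$ and $\gamma v=\omega^\varepsilon v$, where $\omega^*=(c+c^{-1})(a+a^{-1})+(b+b^{-1})(\lambda q+\lambda^{-1}q^{-1})$ and $\omega^\varepsilon=(a+a^{-1})(b+b^{-1})+(c+c^{-1})(\lambda q+\lambda^{-1}q^{-1})$.
   Context: $\mathbb F$ is an algebraically closed field and $q\in\mathbb F^\times$ is a root of unity of order $d\notin\{1,2,4\}$. $\triangle_q$ is the unital associative $\mathbb F$-algebra with generators $A,B,C$ subject to: each of $A+\frac{qBC-q^{-1}CB}{q^2-q^{-2}}$, $B+\frac{qCA-q^{-1}AC}{q^2-q^{-2}}$, $C+\frac{qAB-q^{-1}BA}{q^2-q^{-2}}$ is central; $\alpha,\beta,\gamma$ denote these three central elements multiplied by $q+q^{-1}$. For $(a,b,c,\lambda)\in(\mathbb F^\times)^4$ and $i\in\mathbb N$: $\theta_i=a\lambda^{-1}q^{2i}+a^{-1}\lambda q^{-2i}$, $\theta_i^*=b\lambda^{-1}q^{2i}+b^{-1}\lambda q^{-2i}$, $\varphi_i=a^{-1}b^{-1}\lambda q(q^i-q^{-i})(\lambda^{-1}q^{i-1}-\lambda q^{1-i})(q^{-i}-abc\lambda^{-1}q^{i-1})(q^{-i}-abc^{-1}\lambda^{-1}q^{i-1})$.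 The Verma module $M_\lambda(a,b,c)$ is the $\triangle_q$-module with basis $\{m_i\}_{i\in\mathbb N}$ such that $(A-\theta_i)m_i=m_{i+1}$, $(B-\theta_i^* )m_i=\varphi_im_{i-1}$ for all $i$ ($m_{-1}$ arbitrary), and $\alpha,\beta,\gamma$ act as the scalars $(b+b^{-1})(c+c^{-1})+(a+a^{-1})(\lambda q+\lambda^{-1}q^{-1})$, $(c+c^{-1})(a+a^{-1})+(b+b^{-1})(\lambda q+\lambda^{-1}q^{-1})$, $(a+a^{-1})(b+b^{-1})+(c+c^{-1})(\lambda q+\lambda^{-1}q^{-1})$ respectively. *)

From HB Require Import structures.
From mathcomp Require Import all_boot all_order all_algebra.
Set Implicit Arguments. Unset Strict Implicit. Unset Printing Implicit Defensive.
Import Order.TTheory GRing.Theory Num.Theory.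
Local Open Scope ring_scope.

(* The algebra triangle_q is presented by generators A,B,C and relations
   "each of the three elements below is central".  A module over it is thus
   exactly an F-vector space V with three linear operators A,B,C such that
   the three operators below commute with A, B and C. *)
Section TriQ.
Variables (F : fieldType) (q : F) (V : lmodType F) (A B C : V -> V).

Definition triq_cA (x : V) : V :=
  A x + (q ^+ 2 - q ^- 2)^-1 *: (q *: B (C x) - q^-1 *: C (B x)).
Definition triq_cB (x : V) : V :=
  B x + (q ^+ 2 - q ^- 2)^-1 *: (q *: C (A x) - q^-1 *: A (C x)).
Definition triq_cC (x : V) : V :=
  C x + (q ^+ 2 - q ^- 2)^-1 *: (q *: A (B x) - q^-1 *: B (A x)).

Definition triq_alpha (x : V) : V := (q + q^-1) *: triq_cA x.
Definition triq_beta  (x : V) : V := (q + q^-1) *: triq_cB x.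
Definition triq_gamma (x : V) : V := (q + q^-1) *: triq_cC x.

Definition commutes (f g : V -> V) := forall x, f (g x) = g (f x).

Definition is_triq_module : Prop :=
  (commutes triq_cA A /\ commutes triq_cA B /\ commutes triq_cA C) /\
  (commutes triq_cB A /\ commutes triq_cB B /\ commutes triq_cB C) /\
  (commutes triq_cC A /\ commutes triq_cC B /\ commutes triq_cC C).
End TriQ.

Definition is_basis (F : fieldType) (M : lmodType F) (m : nat -> M) : Prop :=
  (forall x : M, exists (n : nat) (c : nat -> F), x = \sum_(i < n) c i *: m i)
  /\ (forall (n : nat) (c : nat -> F),
        \sum_(i < n) c i *: m i = 0 -> forall i : nat, (i < n)%N -> c i = 0).

Section Params.
Variables (F : fieldType) (q a b c lam : F).

Definition theta (i : nat) : F :=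
  a * lam^-1 * q ^ (2 * i%:Z) + a^-1 * lam * q ^ (- (2 * i%:Z)).
Definition thetas (i : nat) : F :=
  b * lam^-1 * q ^ (2 * i%:Z) + b^-1 * lam * q ^ (- (2 * i%:Z)).
Definition varphi (i : nat) : F :=
  a^-1 * b^-1 * lam * q * (q ^ i%:Z - q ^ (- i%:Z))
  * (lam^-1 * q ^ (i%:Z - 1) - lam * q ^ (1 - i%:Z))
  * (q ^ (- i%:Z) - a * b * c * lam^-1 * q ^ (i%:Z - 1))
  * (q ^ (- i%:Z) - a * b * c^-1 * lam^-1 * q ^ (i%:Z - 1)).

Definition omega_alpha : F :=
  (b + b^-1) * (c + c^-1) + (a + a^-1) * (lam * q + lam^-1 * q^-1).
Definition omega_beta : F :=
  (c + c^-1) * (a + a^-1) + (b + b^-1) * (lam * q + lam^-1 * q^-1).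
Definition omega_gamma : F :=
  (a + a^-1) * (b + b^-1) + (c + c^-1) * (lam * q + lam^-1 * q^-1).
End Params.

Definition is_verma (F : fieldType) (q a b c lam : F) (M : lmodType F)
  (A B C : M -> M) (m : nat -> M) : Prop :=
  is_triq_module q A B C /\ is_basis m /\
  (forall i, A (m i) - theta q a lam i *: m i = m i.+1) /\
  (* m_{-1} is arbitrary since varphi 0 = 0; we take m_{0.-1} = m_0 *)
  (forall i, B (m i) - thetas q b lam i *: m i = varphi q a b c lam i *: m i.-1) /\
  (forall x, triq_alpha q A B C x = omega_alpha q a b c lam *: x) /\
  (forall x, triq_beta q A B C x = omega_beta q a b c lam *: x) /\
  (forall x, triq_gamma q A B C x = omega_gamma q a b c lam *: x).

(* (i) => (ii) holds because m_0 itself satisfies the four relations of (ii)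
   in M_lambda(a,b,c), and a homomorphism transports them.
   Conversely, put w_0 = v and w_(j+1) = (A - theta_j) w_j and let f be the
   linear map with f m_j = w_j; it commutes with A by construction, and since
   beta and gamma commute with A they act on every w_j by the same scalars as
   on v.  The defects D = fB - Bf and E = fC - Cf are tied by the centrality
   of gamma and beta:
     E x = k (q^-1 D(Ax) - q A D x),   D x = k (q^-1 A E x - q E(Ax)),
   with k = 1/(q^2 - q^-2).  Hence D x = D(Ax) = 0 forces E x = 0, then
   E(Ax) = 0, then D(A^2 x) = 0, and the two B-conditions of (ii) say exactly
   D m_0 = D(A m_0) = 0. *)

From HB Require Import structures.
From mathcomp Require Import all_boot all_order all_algebra.
From mathcomp Require Import ring.
Set Implicit Arguments. Unset Strict Implicit. Unset Printing Implicit Defensive.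
Import Order.TTheory GRing.Theory Num.Theory.
Local Open Scope ring_scope.

Section RootOfUnity.
Variables (F : fieldType) (q : F).

Lemma primitive_root_neq0 d : d.-primitive_root q -> q != 0.
Proof.
move=> prim_q; apply: contra_eqN (prim_expr_order prim_q) => /eqP->.
by rewrite expr0n gtn_eqF ?(prim_order_gt0 prim_q) // eq_sym oner_neq0.
Qed.

Lemma primitive_root_expr4_neq1 d : d.-primitive_root q ->
  d != 1%N -> d != 2%N -> d != 4%N -> q ^+ 4 != 1.
Proof.
move=> prim_q d1 d2 d4; rewrite -(prim_order_dvd prim_q).
apply: contra d4 => dvd_d4; have := @dvdn_leq d 4 isT dvd_d4.
by move: d1 d2 dvd_d4; case: d {prim_q} => [|[|[|[|[|]]]]].
Qed.

Lemma expr2_subr_exprN2_neq0 : q != 0 -> q ^+ 4 != 1 -> q ^+ 2 - q ^- 2 != 0.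
Proof.
move=> q0 q4; rewrite subr_eq0; apply: contra q4 => /eqP q2.
by rewrite -[4%N]/(2 * 2)%N exprM expr2 {1}q2 mulVf ?expf_neq0.
Qed.

Hypothesis q2 : q ^+ 2 - q ^- 2 != 0.

Lemma neq0_of_expr2_subr_exprN2 : q != 0.
Proof. by apply: contraNneq q2 => ->; rewrite expr0n /= invr0 subrr. Qed.

Lemma addr_invr_neq0 : q + q^-1 != 0.
Proof.
have q2E : q ^+ 2 - q ^- 2 = (q + q^-1) * (q - q^-1).
  by rewrite mulrC -subr_sqr exprVn.
by move: q2; rewrite q2E mulf_eq0 negb_or => /andP[].
Qed.
End RootOfUnity.

Definition coef_trunc (F : fieldType) n (c : nat -> F) i : F :=
  if (i < n)%N then c i else 0.

Lemma sum_scale_widen (F : fieldType) (W : lmodType F) (u : nat -> W) (c : nat -> F) n N :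
  (n <= N)%N -> \sum_(i < n) c i *: u i = \sum_(i < N) coef_trunc n c i *: u i.
Proof.
move=> le_nN; rewrite (big_ord_widen N (fun i => c i *: u i) le_nN) big_mkcond /=.
by apply: eq_bigr => i _; rewrite /coef_trunc; case: ifP; rewrite ?scale0r.
Qed.

Lemma sum_scale_delta (F : fieldType) (W : lmodType F) (u : nat -> W) j :
  \sum_(i < j.+1) (i == j :> nat)%:R *: u i = u j.
Proof.
rewrite big_ord_recr /= eqxx scale1r big1 ?add0r // => i _.
by rewrite ltn_eqF ?scale0r.
Qed.

Section BasisExtension.
Variables (F : fieldType) (M V : lmodType F) (m : nat -> M).
Hypothesis m_basis : is_basis m.

Lemma basis_comb_eq (w : nat -> V) n n' (c c' : nat -> F) :
  \sum_(i < n) c i *: m i = \sum_(i < n') c' i *: m i ->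
  \sum_(i < n) c i *: w i = \sum_(i < n') c' i *: w i.
Proof.
rewrite !(sum_scale_widen _ c (leq_maxl n n')) !(sum_scale_widen _ c' (leq_maxr n n')).
move=> /eqP; rewrite -subr_eq0 -sumrB => /eqP eq0; apply/eqP.
rewrite -subr_eq0 -sumrB; apply/eqP/big1 => i _; rewrite -scalerBl.
suff -> : coef_trunc n c i - coef_trunc n' c' i = 0 by rewrite scale0r.
apply: (m_basis.2 _ (fun i => coef_trunc n c i - coef_trunc n' c' i) _ i (ltn_ord i)).
by rewrite -[RHS]eq0; apply: eq_bigr => j _; rewrite scalerBl.
Qed.

Lemma linear_eq_on_basis (g h : {linear M -> V}) :
  (forall j, g (m j) = h (m j)) -> g =1 h.
Proof.
move=> gh x; have [n [c ->]] := m_basis.1 x.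
by rewrite !linear_sum; apply: eq_bigr => i _; rewrite !linearZ gh.
Qed.

Variable w : nat -> V.

Lemma basis_seq_coord x : exists s : seq F, x == \sum_(i < size s) s`_i *: m i.
Proof.
have [n [c ->]] := m_basis.1 x; exists (mkseq c n); rewrite size_mkseq.
by apply/eqP/eq_bigr => i _; rewrite nth_mkseq.
Qed.

(* Coordinates are taken in seq F, a choiceType, so that xchoose selects them
   without an axiom of choice. *)
Definition basis_ext (x : M) : V :=
  let s := xchoose (basis_seq_coord x) in \sum_(i < size s) s`_i *: w i.

Lemma basis_extE n (c : nat -> F) :
  basis_ext (\sum_(i < n) c i *: m i) = \sum_(i < n) c i *: w i.
Proof. by apply: basis_comb_eq; rewrite -(eqP (xchooseP (basis_seq_coord _))). Qed.

Lemma basis_ext_is_linear : linear basis_ext.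
Proof.
move=> k x y; have [n [c ->]] := m_basis.1 x; have [n' [c' ->]] := m_basis.1 y.
rewrite !basis_extE !(sum_scale_widen _ c (leq_maxl n n')).
rewrite !(sum_scale_widen _ c' (leq_maxr n n')) !scaler_sumr -!big_split /=.
have comb (u : nat -> _) i : k *: (coef_trunc n c i *: u i) + coef_trunc n' c' i *: u i
    = (k * coef_trunc n c i + coef_trunc n' c' i) *: u i by rewrite scalerDl scalerA.
under eq_bigr do rewrite comb.
rewrite (basis_extE _ (fun i => k * coef_trunc n c i + coef_trunc n' c' i)).
by apply: eq_bigr => i _; rewrite comb.
Qed.

HB.instance Definition _ := GRing.isLinear.Build F M V *:%R basis_ext basis_ext_is_linear.

Lemma basis_ext_basis j : basis_ext (m j) = w j.
Proof.
by rewrite -(sum_scale_delta m) (basis_extE _ (fun i => (i == j)%:R)) sum_scale_delta.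
Qed.

Lemma linear_ext_of_basis : exists f : {linear M -> V}, forall j, f (m j) = w j.
Proof. by exists basis_ext; apply: basis_ext_basis. Qed.
End BasisExtension.

Lemma subrACA (V : zmodType) (a b c d : V) : (a - b) - (c - d) = (a - c) - (b - d).
Proof. by rewrite !opprB addrACA [RHS]addrACA [- b + _]addrC. Qed.

Section TriangleForm.
Variables (F : fieldType) (q : F).
Local Notation kappa := (q ^+ 2 - q ^- 2)^-1.

Definition tri_op (V : lmodType F) (X Y Z : {linear V -> V}) : {linear V -> V} :=
  (q + q^-1) \*: (X \+ kappa \*: (q \*: (Y \o Z) \- q^-1 \*: (Z \o Y))).

Lemma triq_betaE (V : lmodType F) (A B C : {linear V -> V}) x :
  triq_beta q A B C x = tri_op B C A x.
Proof. by []. Qed.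

Lemma triq_gammaE (V : lmodType F) (A B C : {linear V -> V}) x :
  triq_gamma q A B C x = tri_op C A B x.
Proof. by []. Qed.

Lemma triq_beta_commA (V : lmodType F) (A B C : {linear V -> V}) x :
  is_triq_module q A B C -> triq_beta q A B C (A x) = A (triq_beta q A B C x).
Proof. by case=> _ [[cBA _] _]; rewrite /triq_beta cBA linearZ. Qed.

Lemma triq_gamma_commA (V : lmodType F) (A B C : {linear V -> V}) x :
  is_triq_module q A B C -> triq_gamma q A B C (A x) = A (triq_gamma q A B C x).
Proof. by case=> _ [_ [cCA _]]; rewrite /triq_gamma cCA linearZ. Qed.

Variables (M V : lmodType F) (f : {linear M -> V}).

Definition defect (X' : {linear M -> M}) (X : {linear V -> V}) : {linear M -> V} :=
  (f \o X') \- (X \o f).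

Lemma defect_comp (X' Y' : {linear M -> M}) (X Y : {linear V -> V}) x :
  f (X' (Y' x)) - X (Y (f x)) = defect X' X (Y' x) + X (defect Y' Y x).
Proof. by rewrite /= linearB addrA subrK. Qed.

Lemma tri_op_defect (X' Y' Z' : {linear M -> M}) (X Y Z : {linear V -> V}) x :
  f (tri_op X' Y' Z' x) - tri_op X Y Z (f x) =
  (q + q^-1) *: (defect X' X x + kappa *:
     (q *: (defect Y' Y (Z' x) + Y (defect Z' Z x))
      - q^-1 *: (defect Z' Z (Y' x) + Z (defect Y' Y x)))).
Proof.
rewrite -!defect_comp /= [f _]linearZ /= [f (_ + _)]linearD [f (kappa *: _)]linearZ /=.
rewrite [f (_ - _)]linearB /= ![f (_ *: _)]linearZ /= -scalerBr opprD addrACA.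
by rewrite -scalerBr subrACA -!scalerBr.
Qed.

Lemma defect_eq0 (X' : {linear M -> M}) (X : {linear V -> V}) :
  (forall x, f (X' x) = X (f x)) -> forall x, defect X' X x = 0.
Proof. by move=> fX x; rewrite /= fX subrr. Qed.

Lemma tri_op_intertwine (X' Y' Z' : {linear M -> M}) (X Y Z : {linear V -> V}) :
  (forall x, f (X' x) = X (f x)) -> (forall x, f (Y' x) = Y (f x)) ->
  (forall x, f (Z' x) = Z (f x)) ->
  forall x, f (tri_op X' Y' Z' x) = tri_op X Y Z (f x).
Proof.
move=> /defect_eq0 fX /defect_eq0 fY /defect_eq0 fZ x; apply/eqP.
by rewrite -subr_eq0 tri_op_defect !(fX, fY, fZ) !(linear0, addr0, subrr).
Qed.
End TriangleForm.

Section DefectPropagation.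
Variables (F : fieldType) (q : F) (M V : lmodType F).
Variables (AM BM CM : {linear M -> M}) (AV BV CV : {linear V -> V}).
Variables (f : {linear M -> V}) (wb wg : F).
Hypothesis q2 : q ^+ 2 - q ^- 2 != 0.
Hypothesis fA : forall x, f (AM x) = AV (f x).
Hypothesis betaM : forall x, triq_beta q AM BM CM x = wb *: x.
Hypothesis gammaM : forall x, triq_gamma q AM BM CM x = wg *: x.
Hypothesis betaV : forall x, triq_beta q AV BV CV (f x) = wb *: f x.
Hypothesis gammaV : forall x, triq_gamma q AV BV CV (f x) = wg *: f x.

Local Notation kappa := (q ^+ 2 - q ^- 2)^-1.
Local Notation DB := (defect f BM BV).
Local Notation DC := (defect f CM CV).

Let DA0 := defect_eq0 fA.

Let tri_op_defect_eq0 (X' Y' Z' : {linear M -> M}) (X Y Z : {linear V -> V}) w x :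
  f (tri_op q X' Y' Z' x) = w *: f x -> tri_op q X Y Z (f x) = w *: f x ->
  defect f X' X x + kappa *:
     (q *: (defect f Y' Y (Z' x) + Y (defect f Z' Z x))
      - q^-1 *: (defect f Z' Z (Y' x) + Z (defect f Y' Y x))) = 0.
Proof.
move=> eqM eqV; have := tri_op_defect q f X' Y' Z' X Y Z x.
by rewrite eqM eqV subrr => /esym/eqP; rewrite scaler_eq0 (negbTE (addr_invr_neq0 q2)) => /eqP.
Qed.

Lemma defectC_of_defectB x : DC x = kappa *: (q^-1 *: DB (AM x) - q *: AV (DB x)).
Proof.
have := @tri_op_defect_eq0 CM AM BM CV AV BV wg x.
rewrite -!triq_gammaE gammaM linearZ gammaV !DA0 linear0 add0r addr0 => /(_ erefl erefl).
by move/eqP; rewrite addr_eq0 => /eqP->; rewrite -scalerN opprB.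
Qed.

Lemma defectB_of_defectC x : DB x = kappa *: (q^-1 *: AV (DC x) - q *: DC (AM x)).
Proof.
have := @tri_op_defect_eq0 BM CM AM BV CV AV wb x.
rewrite -!triq_betaE betaM linearZ betaV !DA0 linear0 add0r addr0 => /(_ erefl erefl).
by move/eqP; rewrite addr_eq0 => /eqP->; rewrite -scalerN opprB.
Qed.

Lemma defectB_step x : DB x = 0 -> DB (AM x) = 0 -> DB (AM (AM x)) = 0.
Proof.
have kq0 : kappa != 0 by rewrite invr_eq0.
have q0 : q != 0 := neq0_of_expr2_subr_exprN2 q2.
move=> DBx DBAx; have := defectC_of_defectB x.
rewrite DBx DBAx !(linear0, subrr) => DCx.
have := defectB_of_defectC x; rewrite DBx DCx !(linear0, sub0r).
move=> /esym/eqP; rewrite scaler_eq0 (negbTE kq0) oppr_eq0 scaler_eq0 (negbTE q0).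
rewrite defectC_of_defectB DBAx !(linear0, subr0) scalerA scaler_eq0 mulf_eq0.
by rewrite (negbTE kq0) invr_eq0 (negbTE q0) => /eqP.
Qed.

Variables (m : nat -> M) (th : nat -> F).
Hypothesis m_basis : is_basis m.
Hypothesis AM_m : forall j, AM (m j) - th j *: m j = m j.+1.
Hypothesis DB_m0 : DB (m 0) = 0.
Hypothesis DB_Am0 : DB (AM (m 0)) = 0.

Lemma defectB_basis j : DB (m j) = 0 /\ DB (AM (m j)) = 0.
Proof.
have DB_shift x t : DB (AM x - t *: x) = DB (AM x) - t *: DB x.
  by rewrite linearB linearZZ.
elim: j => [|j [DBj DBAj]]; first by [].
rewrite -AM_m DB_shift [AM (_ - _)]linearB [AM (_ *: _)]linearZZ DB_shift.
by rewrite defectB_step // DBAj DBj !(linear0, subrr).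
Qed.

Lemma intertwine_of_defectB_basis :
  (forall x, f (BM x) = BV (f x)) /\ (forall x, f (CM x) = CV (f x)).
Proof.
have fB : forall x, f (BM x) = BV (f x).
  apply: (linear_eq_on_basis m_basis (g := f \o BM) (h := BV \o f)) => j /=.
  by apply/eqP; rewrite -subr_eq0; apply/eqP; case: (defectB_basis j).
split=> // x; apply/eqP; rewrite -subr_eq0; apply/eqP; change (DC x = 0).
by rewrite defectC_of_defectB !(defect_eq0 fB) !(linear0, subrr).
Qed.
End DefectPropagation.

Section RaisingSequence.
Variables (F : fieldType) (V : lmodType F) (A : {linear V -> V}) (th : nat -> F) (v : V).

Fixpoint raising_seq j : V :=
  if j is j'.+1 then A (raising_seq j') - th j' *: raising_seq j' else v.

Lemma raising_seq_eigen (L : {linear V -> V}) k :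
  (forall x, L (A x) = A (L x)) -> L v = k *: v ->
  forall j, L (raising_seq j) = k *: raising_seq j.
Proof.
move=> LA Lv; elim=> [|j IHj] //=.
by rewrite linearB linearZZ LA IHj linearZZ scalerBr !scalerA mulrC.
Qed.
End RaisingSequence.

Section VermaModule.
Variables (F : fieldType) (q a b c lam : F) (M : lmodType F).
Variables (AM BM CM : {linear M -> M}) (m : nat -> M).
Hypothesis HM : is_verma q a b c lam AM BM CM m.

Local Notation th := (theta q a lam).
Local Notation ths := (thetas q b lam).
Local Notation K := (th 0 * (ths 0 - ths 1) + varphi q a b c lam 1).

Lemma varphi0 : varphi q a b c lam 0 = 0.
Proof. by rewrite /varphi oppr0 expr0z subrr !mulr0 !mul0r. Qed.

Lemma verma_Am j : AM (m j) = m j.+1 + th j *: m j.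
Proof. by have [_ [_ [HA _]]] := HM; rewrite -HA subrK. Qed.

Lemma verma_Bm j : BM (m j) = ths j *: m j + varphi q a b c lam j *: m j.-1.
Proof. by have [_ [_ [_ [HB _]]]] := HM; rewrite -HB addrC subrK. Qed.

Lemma verma_Bm0 : BM (m 0) = ths 0 *: m 0.
Proof. by rewrite verma_Bm varphi0 scale0r addr0. Qed.

Lemma verma_BAm0 : BM (AM (m 0)) - ths 1 *: AM (m 0) = K *: m 0.
Proof.
rewrite verma_Am linearD linearZ /= verma_Bm verma_Bm0 /= scalerDr !scalerA.
rewrite addrAC opprD addrACA subrr add0r -!scalerBl -scalerDl.
by congr (_ *: _); ring.
Qed.

Lemma verma_hom_conditions (V : lmodType F) (AV BV CV : {linear V -> V})
    (f : {linear M -> V}) :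
  (forall x, f (AM x) = AV (f x)) -> (forall x, f (BM x) = BV (f x)) ->
  (forall x, f (CM x) = CV (f x)) ->
  [/\ BV (f (m 0)) = ths 0 *: f (m 0),
      (BV \o AV) (f (m 0)) - ths 1 *: AV (f (m 0)) = K *: f (m 0),
      triq_beta q AV BV CV (f (m 0)) = omega_beta q a b c lam *: f (m 0) &
      triq_gamma q AV BV CV (f (m 0)) = omega_gamma q a b c lam *: f (m 0)].
Proof.
move=> fA fB fC; have [_ [_ [_ [_ [_ [betaM gammaM]]]]]] := HM.
split.
- by rewrite -fB verma_Bm0 linearZ.
- by rewrite /= -fA -fB -linearZ -linearB verma_BAm0 linearZ.
- by rewrite triq_betaE -(tri_op_intertwine q fB fC fA) -triq_betaE betaM linearZ.
- by rewrite triq_gammaE -(tri_op_intertwine q fC fA fB) -triq_gammaE gammaM linearZ.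
Qed.

Lemma verma_hom_of_conditions (V : lmodType F) (AV BV CV : {linear V -> V}) (v : V) :
  q ^+ 2 - q ^- 2 != 0 -> is_triq_module q AV BV CV ->
  BV v = ths 0 *: v -> (BV \o AV) v - ths 1 *: AV v = K *: v ->
  triq_beta q AV BV CV v = omega_beta q a b c lam *: v ->
  triq_gamma q AV BV CV v = omega_gamma q a b c lam *: v ->
  exists f : {linear M -> V},
    [/\ forall x, f (AM x) = AV (f x), forall x, f (BM x) = BV (f x),
        forall x, f (CM x) = CV (f x) & f (m 0) = v].
Proof.
move=> q2 HV Bv BAv betav gammav.
have [_ [m_basis [HA [_ [_ [betaM gammaM]]]]]] := HM.
have [f fm] := linear_ext_of_basis m_basis (raising_seq AV th v).
have fA : forall x, f (AM x) = AV (f x).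
  apply: (linear_eq_on_basis m_basis (g := f \o AM) (h := AV \o f)) => j /=.
  by rewrite verma_Am linearD linearZ /= !fm /= subrK.
have eigen_f (L : {linear V -> V}) k : (forall x, L (AV x) = AV (L x)) ->
    L v = k *: v -> forall x, L (f x) = k *: f x.
  move=> LA Lv; apply: (linear_eq_on_basis m_basis (g := L \o f) (h := k \*: f)) => j /=.
  by rewrite fm; apply: raising_seq_eigen.
have betaV := eigen_f (tri_op q BV CV AV) _ (fun x => triq_beta_commA x HV) betav.
have gammaV := eigen_f (tri_op q CV AV BV) _ (fun x => triq_gamma_commA x HV) gammav.
have DB0 : defect f BM BV (m 0) = 0 by rewrite /= verma_Bm0 linearZ /= fm Bv subrr.
have DBA0 : defect f BM BV (AM (m 0)) = 0.
  rewrite /= -[BM (AM _)](subrK (ths 1 *: AM (m 0))) verma_BAm0 linearD !linearZ /=.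
  by rewrite fA fm -BAv /= subrK subrr.
have [fB fC] := intertwine_of_defectB_basis q2 fA betaM gammaM betaV gammaV m_basis HA DB0 DBA0.
by exists f; split; rewrite ?fm.
Qed.
End VermaModule.

Unset Implicit Arguments.
Set Strict Implicit.

Theorem proposition3p1 (F : closedFieldType) (q : F) (d : nat)
  (Hq : d.-primitive_root q) (Hd1 : d != 1%N) (Hd2 : d != 2%N) (Hd4 : d != 4%N)
  (a b c lam : F) (Ha : a != 0) (Hb : b != 0) (Hc : c != 0) (Hlam : lam != 0)
  (M : lmodType F) (AM BM CM : {linear M -> M}) (m : nat -> M)
  (HM : is_verma q a b c lam AM BM CM m)
  (V : lmodType F) (AV BV CV : {linear V -> V})
  (HV : is_triq_module q AV BV CV) (v : V) :
  (exists f : {linear M -> V},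
     [/\ forall x, f (AM x) = AV (f x),
         forall x, f (BM x) = BV (f x),
         forall x, f (CM x) = CV (f x) &
         f (m 0%N) = v])
  <->
  [/\ BV v = thetas q b lam 0 *: v,
      (BV \o AV) v - thetas q b lam 1 *: AV v
        = (theta q a lam 0 * (thetas q b lam 0 - thetas q b lam 1)
           + varphi q a b c lam 1) *: v,
      triq_beta q AV BV CV v = omega_beta q a b c lam *: v &
      triq_gamma q AV BV CV v = omega_gamma q a b c lam *: v].
Proof.
have q2 : q ^+ 2 - q ^- 2 != 0.
  apply: expr2_subr_exprN2_neq0; first exact: primitive_root_neq0 Hq.
  exact: primitive_root_expr4_neq1 Hq Hd1 Hd2 Hd4.
split=> [[f [fA fB fC <-]] | [Bv BAv betav gammav]].
  exact (verma_hom_conditions HM fA fB fC).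
exact (verma_hom_of_conditions HM q2 HV Bv BAv betav gammav).
Qed.
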